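(* Let $\mathcal{G}$ be an ultragraph and suppose there exists $n\geq1$ such that $X_1,\dots,X_n\neq\emptyset$ and $\big(\bigcup_{e\in\mathcal{G}^1}r(e)\big)\cup s(\mathcal{G}^1)=\bigcup_{i=1}^n(\overline{X_i}\cup I_i)$. Let $R$ be a field, $N$ an $R$-vector space and $\pi:L_R(\mathcal{G})\to\mathrm{Hom}_R(N)$ a representation, and suppose that $N_{r(e)}=\bigoplus_{v\in r(e)}N_v$ for each $e\in\mathcal{G}^1$. Let $M=\pi(L_R(\mathcal{G}))(N)$ and let $\widetilde{\pi}:L_R(\mathcal{G})\to\mathrm{Hom}_R(M)$ be the restriction of $\pi$. If $N_v=\bigoplus_{e\in s^{-1}(v)}N_e$ for each vertex $v$ which is not a sink, then $\widetilde{\pi}$ is equivalent to a representation induced by some $\mathcal{G}$-algebraic branching system.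
   Context: An ultragraph $\mathcal{G}=(G^0,\mathcal{G}^1,r,s)$ consists of sets $G^0$, $\mathcal{G}^1$, a map $s:\mathcal{G}^1\to G^0$ and a map $r:\mathcal{G}^1\to P(G^0)\setminus\{\emptyset\}$. $\mathcal{G}^0$ is the smallest subset of $P(G^0)$ containing $\{v\}$ ($v\in G^0$) and $r(e)$ ($e\in\mathcal{G}^1$), closed under finite unions and intersections; write $p_v=p_{\{v\}}$, $D_v=D_{\{v\}}$. A vertex $v$ is a sink if $s^{-1}(v)=\emptyset$. $L_R(\mathcal{G})$ is the universal $R$-algebra generated by $\{s_e,s_e^*:e\in\mathcal{G}^1\}\cup\{p_A:A\in\mathcal{G}^0\}$ subject to: (1) $p_\emptyset=0$, $p_Ap_B=p_{A\cap B}$, $p_{A\cup B}=p_A+p_B-p_{A\cap B}$; (2) $p_{s(e)}s_e=s_ep_{r(e)}=s_e$, $p_{r(e)}s_e^*=s_e^*p_{s(e)}=s_e^*$; (3) $s_e^*s_f=\delta_{e,f}p_{r(e)}$; (4) $p_v=\sum_{s(e)=v}s_es_e^*$ whenever $0<|s^{-1}(v)|<\infty$. For $\pi$ as in the claim, $N_A=\pi(p_A)(N)$, $N_v=N_{\{v\}}$, $N_e=\pi(s_es_e^* )(N)$. Extreme vertices: for an ultragraph, an extreme vertex is a set $A\in r(\mathcal{G}^1)\cup\{\{s(e)\}:e\in\mathcal{G}^1\}$ such that either $A=r(e)$ for some edge $e$ and $A\cap\bigcup_{f\neq e}r(f)=\emptyset=A\cap s(\mathcal{G}^1)$, or $A=\{s(e)\}$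 for some edge $e$ and $A\cap s(\mathcal{G}^1\setminus\{e\})=\emptyset=A\cap\bigcup_{f\in\mathcal{G}^1}r(f)$; this $e$ is the extreme edge of $A$. The isolated vertices of an ultragraph are the vertices lying in no $r(e)$ and not equal to any $s(e)$. Inductive construction: $I_0$ = isolated vertices of $\mathcal{G}$, $\mathbb{G}_0=(G^0\setminus I_0,\mathcal{G}^1,r,s)$; $X_1,Y_1$ = extreme vertices and extreme edges of $\mathbb{G}_0$, $\overline{X_1}=\bigcup_{A\in X_1}A$; $I_1$ = isolated vertices of $(G^0\setminus(I_0\cup\overline{X_1}),\mathcal{G}^1\setminus Y_1,r,s)$ and $\mathbb{G}_1=(G^0\setminus(I_0\cup I_1\cup\overline{X_1}),\mathcal{G}^1\setminus Y_1,r,s)$. In general, while $X_k\neq\emptyset$, $X_{k+1},Y_{k+1}$ are the extreme vertices and extreme edges of $\mathbb{G}_k$, $\overline{X_{k+1}}=\bigcup_{A\in X_{k+1}}A$, $I_{k+1}$ is the set of isolated vertices of $(G^0\setminus(I_0\cup\dots\cup I_k\cup\overline{X_1}\cup\dots\cup\overline{X_{k+1}}),\mathcal{G}^1\setminus(Y_1\cup\dots\cup Y_{k+1}),r,s)$, and $\mathbb{G}_{k+1}$ is this ultragraph with the vertices of $I_{k+1}$ also removed. A $\mathcal{G}$-algebraic branching system on a set $X$ is a family of subsets $R_e,D_A\subseteq X$ and maps $f_e$ with: (i) $R_e\cap R_f=\emptyset$ for $e\neq f$; (ii) $D_\emptyset=\emptyset$, $D_A\cap D_B=D_{A\cap B}$,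 $D_A\cup D_B=D_{A\cup B}$; (iii) $R_e\subseteq D_{s(e)}$; (iv) $D_v=\bigcup_{e\in s^{-1}(v)}R_e$ whenever $0<|s^{-1}(v)|<\infty$; (v) $f_e:D_{r(e)}\to R_e$ is a bijection. The representation induced by it acts on the $R$-module $M'$ of maps $X\to R$ (all maps, or those with finite support) by $\pi'(s_e)(\phi)(x)=\phi(f_e^{-1}(x))$ for $x\in R_e$ and $0$ otherwise, $\pi'(s_e^* )(\phi)(x)=\phi(f_e(x))$ for $x\in D_{r(e)}$ and $0$ otherwise, $\pi'(p_A)(\phi)=1_{D_A}\phi$. Two representations $\rho:L_R(\mathcal{G})\to\mathrm{Hom}_R(M)$, $\rho':L_R(\mathcal{G})\to\mathrm{Hom}_R(M')$ are equivalent if there is an $R$-module isomorphism $T:M\to M'$ with $T\circ\rho(a)=\rho'(a)\circ T$ for all $a$. *)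

From mathcomp Require Import all_boot all_algebra.
From mathcomp Require Import boolp classical_sets functions cardinality fsbigop.
Set Implicit Arguments. Unset Strict Implicit. Unset Printing Implicit Defensive.
Import GRing.Theory.
Local Open Scope classical_set_scope.
Local Open Scope ring_scope.

Section Ultragraph.
(* An ultragraph G = (G^0, G^1, r, s): vertices V, edges E,
   s : E -> V, r : E -> nonempty subsets of V (nonemptiness is a hypothesis
   of the main theorem). *)
Variables (V E : choiceType) (s : E -> V) (r : E -> set V).

Inductive Gen0 : set V -> Prop :=
  | Gen0_empty : Gen0 set0
  | Gen0_vertex v : Gen0 [set v]
  | Gen0_range e : Gen0 (r e)
  | Gen0_union A B : Gen0 A -> Gen0 B -> Gen0 (A `|` B)
  | Gen0_inter A B : Gen0 A -> Gen0 B -> Gen0 (A `&` B).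

(* Everything below is relative to a sub-ultragraph with vertex set W and
   edge set F (r and s are unchanged). *)

Definition extreme (F : set E) (A : set V) (e : E) : Prop :=
  F e /\
  ( (A = r e /\ (forall f, F f -> f <> e -> A `&` r f = set0)
             /\ (forall f, F f -> ~ A (s f)))
  \/ (A = [set s e] /\ (forall f, F f -> f <> e -> ~ A (s f))
             /\ (forall f, F f -> A `&` r f = set0)) ).

Definition extreme_vertices (F : set E) : set (set V) :=
  [set A | exists e, extreme F A e].
Definition extreme_edges (F : set E) : set E :=
  [set e | exists A, extreme F A e].
Definition extreme_union (F : set E) : set V :=
  \bigcup_(A in extreme_vertices F) A.

Definition isolated (W : set V) (F : set E) : set V :=
  [set v | W v /\ (forall f, F f -> ~ r f v) /\ (forall f, F f -> s f <> v)].

Definition step (WF : set V * set E) : set V * set E :=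
  let W' := WF.1 `\` extreme_union WF.2 in
  let F' := WF.2 `\` extreme_edges WF.2 in
  (W' `\` isolated W' F', F').

(* stage k = (vertex set, edge set) of \mathbb{G}_k *)
Fixpoint stage (k : nat) : set V * set E :=
  match k with
  | 0 => (setT `\` isolated setT setT, setT)
  | k'.+1 => step (stage k')
  end.

(* X_k for k >= 1 : extreme vertices of \mathbb{G}_{k-1} *)
Definition Xk (k : nat) : set (set V) := extreme_vertices (stage k.-1).2.
Definition Xbar (k : nat) : set V := extreme_union (stage k.-1).2.
Definition Ik (k : nat) : set V :=
  match k with
  | 0 => isolated setT setT
  | k'.+1 =>
      let WF := stage k' in
      let W' := WF.1 `\` extreme_union WF.2 in
      let F' := WF.2 `\` extreme_edges WF.2 in
      isolated W' F'
  end.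

Variables (R : fieldType) (N : lmodType R).

(* A representation  pi : L_R(G) -> Hom_R(N)  is given (by the universal
   property of L_R(G)) by the images of the generators:
   P A = pi(p_A), S e = pi(s_e), Ss e = pi(s_e^* ), satisfying (1)-(4). *)
Definition is_rep (P : set V -> N -> N) (S Ss : E -> N -> N) : Prop :=
  [/\ [/\ forall A, Gen0 A -> linear (P A),
          forall e, linear (S e) & forall e, linear (Ss e)],
      ((forall x, P set0 x = 0)
      /\ (forall A B, Gen0 A -> Gen0 B -> forall x, P A (P B x) = P (A `&` B) x)
      /\ (forall A B, Gen0 A -> Gen0 B -> forall x,
             P (A `|` B) x = P A x + P B x - P (A `&` B) x)),
      (forall e x, P [set s e] (S e x) = S e x /\ S e (P (r e) x) = S e x
                /\ P (r e) (Ss e x) = Ss e x /\ Ss e (P [set s e] x) = Ss e x),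
      (forall e f x, Ss e (S f x) = if e == f then P (r e) x else 0)
  &
      (forall v, s @^-1` [set v] !=set0 -> finite_set (s @^-1` [set v]) ->
         forall x, P [set v] x = \sum_(e \in s @^-1` [set v]) S e (Ss e x)) ].

(* M = pi(L_R(G))(N): the R-subspace of N spanned by all pi(a)(n), i.e. the
   smallest subspace containing pi(g)(N) for every generator g and stable
   under every pi(g) (pi(L_R(G)) is spanned by nonempty words in generators) *)
Inductive image_module (P : set V -> N -> N) (S Ss : E -> N -> N) : set N :=
  | im_P A x : Gen0 A -> image_module P S Ss (P A x)
  | im_S e x : image_module P S Ss (S e x)
  | im_Ss e x : image_module P S Ss (Ss e x)
  | im_zero : image_module P S Ss 0
  | im_add x y : image_module P S Ss x -> image_module P S Ss y ->
                 image_module P S Ss (x + y)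
  | im_scale (a : R) x : image_module P S Ss x -> image_module P S Ss (a *: x).

Definition internal_dsum (T : choiceType) (Y : set N) (I : set T)
    (Ns : T -> set N) : Prop :=
  (forall x, Y x <->
     exists (J : set T) (xs : T -> N), [/\ finite_set J, J `<=` I,
        (forall i, J i -> Ns i (xs i)) & x = \sum_(i \in J) xs i])
  /\ (forall (J : set T) (xs : T -> N), finite_set J -> J `<=` I ->
        (forall i, J i -> Ns i (xs i)) -> \sum_(i \in J) xs i = 0 ->
        forall i, J i -> xs i = 0).

(* A G-algebraic branching system on a set X. The bijection f_e : D_{r(e)} -> R_e
   is given together with its inverse finv_e. *)
Definition branching_system (X : Type) (Rs : E -> set X) (D : set V -> set X)
    (f finv : E -> X -> X) : Prop :=
  [/\ (forall e g, e <> g -> Rs e `&` Rs g = set0),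
      (D set0 = set0
      /\ (forall A B, Gen0 A -> Gen0 B -> D A `&` D B = D (A `&` B))
      /\ (forall A B, Gen0 A -> Gen0 B -> D A `|` D B = D (A `|` B))),
      (forall e, Rs e `<=` D [set s e]),
      (forall v, s @^-1` [set v] !=set0 -> finite_set (s @^-1` [set v]) ->
         D [set v] = \bigcup_(e in s @^-1` [set v]) Rs e)
    & (forall e, [/\ forall x, D (r e) x -> Rs e (f e x),
                     forall y, Rs e y -> D (r e) (finv e y),
                     forall x, D (r e) x -> finv e (f e x) = x &
                     forall y, Rs e y -> f e (finv e y) = y]) ].

Definition bs_S (X : Type) (Rs : E -> set X) (finv : E -> X -> X) (e : E)
    (phi : X -> R) : X -> R :=
  fun x => if x \in Rs e then phi (finv e x) else 0.
Definition bs_Ss (X : Type) (D : set V -> set X) (f : E -> X -> X) (e : E)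
    (phi : X -> R) : X -> R :=
  fun x => if x \in D (r e) then phi (f e x) else 0.
Definition bs_P (X : Type) (D : set V -> set X) (A : set V)
    (phi : X -> R) : X -> R :=
  fun x => if x \in D A then phi x else 0.

(* the module M' : all maps X -> R (fin = false) or those with finite
   support (fin = true) *)
Definition bs_module (X : Type) (fin : bool) : set (X -> R) :=
  [set phi | fin -> finite_set [set x | phi x != 0]].

Definition equivalent_to_induced (P : set V -> N -> N) (S Ss : E -> N -> N)
    (X : Type) (fin : bool) (Rs : E -> set X) (D : set V -> set X)
    (f finv : E -> X -> X) : Prop :=
  let M := image_module P S Ss in
  let M' := @bs_module X fin in
  exists T : N -> (X -> R),
  [/\ (forall (a : R) x y, M x -> M y -> T (a *: x + y) = (fun z => a * T x z + T y z)),
      (forall x, M x -> M' (T x)),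
      (forall x y, M x -> M y -> T x = T y -> x = y),
      (forall phi, M' phi -> exists2 x, M x & T x = phi)
    & (forall x, M x ->
         (forall e, T (S e x) = bs_S Rs finv e (T x))
         /\ (forall e, T (Ss e x) = bs_Ss D f e (T x))
         /\ (forall A, Gen0 A -> T (P A x) = bs_P D A (T x))) ].

End Ultragraph.

(* The cover hypothesis puts the source of every edge into some
   X_i-bar or I_i, which forces the edge to be removed at a stage k < n of the
   inductive construction, as a range-extreme or a source-extreme edge.
   Ranking edges by that stage shows that G has no infinite walk.  Fix a
   basis of N_w for every sink w.  The vectors S_{e_1} ... S_{e_k} u, indexed
   by walks e_1 ... e_k ending at a sink w and basis vectors u of N_w, form a
   basis of M: they span M by well-founded induction along walks, using
   N_{r(e)} = (+)_v N_v and N_v = (+)_e N_e, and they are independent since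
   s_e^* strips a leading e and p_w isolates the walks of length 0.  On this
   basis s_e prepends e, s_e^* removes a leading e and p_A keeps the walks
   starting in A, which is the representation induced by the branching system
   R_e = walks starting with e, D_A = walks starting in A. *)

From mathcomp Require Import all_boot all_algebra.
From mathcomp Require Import boolp classical_sets functions cardinality fsbigop.
From mathcomp Require Import zify.
Import GRing.Theory.
Local Open Scope classical_set_scope.
Local Open Scope ring_scope.
Set Implicit Arguments. Unset Strict Implicit. Unset Printing Implicit Defensive.

Section LinearFun.
Variables (R : pzRingType) (U W : lmodType R) (g : U -> W).
Hypothesis g_lin : linear g.

Lemma linear_fun0 : g 0 = 0.
Proof.
have h := g_lin 1 0 0; rewrite scale1r addr0 scale1r in h.
by apply: (addrI (g 0)); rewrite addr0 -h.
Qed.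

Lemma linear_funD x y : g (x + y) = g x + g y.
Proof. by have := g_lin 1 x y; rewrite !scale1r. Qed.

Lemma linear_funZ a x : g (a *: x) = a *: g x.
Proof. by have := g_lin a x 0; rewrite !addr0 linear_fun0 addr0. Qed.

Lemma linear_fun_sum (I : Type) (l : seq I) (F : I -> U) :
  g (\sum_(i <- l) F i) = \sum_(i <- l) g (F i).
Proof.
elim: l => [|i l IH]; first by rewrite !big_nil linear_fun0.
by rewrite !big_cons linear_funD IH.
Qed.

End LinearFun.

Lemma seq_in_chain (T : eqType) (F : set (set T)) (l : seq T) :
  total_on F subset -> (forall x, x \in l -> (\bigcup_(B in F) B) x) ->
  l = [::] \/ exists2 B, F B & forall x, x \in l -> B x.
Proof.
move=> tot; elim: l => [|x l IH] lF; first by left.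
right; have [Bx FBx Bx_x] := lF x (mem_head _ _).
have [->|[B FB lB]] := IH (fun y yl => lF y (@mem_behead _ (x :: l) y yl)).
  by exists Bx => // y; rewrite inE => /eqP ->.
have [BBx|BxB] := tot _ _ FB FBx.
- by exists Bx => // y; rewrite inE => /orP[/eqP ->|/lB/BBx].
- by exists B => // y; rewrite inE => /orP[/eqP ->|/lB]; [exact: BxB|].
Qed.

Section FreeSets.
Variables (K : fieldType) (N : lmodType K).

Definition free_set (B : set N) :=
  forall (l : seq N) (c : N -> K), uniq l -> (forall x, x \in l -> B x) ->
    \sum_(x <- l) c x *: x = 0 -> forall x, x \in l -> c x = 0.

Definition span_set (B : set N) : set N :=
  [set y | exists (l : seq N) (c : N -> K),
     (forall x, x \in l -> B x) /\ y = \sum_(x <- l) c x *: x].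

Lemma free_bigcup_chain (F : set (set N)) :
  (forall B, F B -> free_set B) -> total_on F subset ->
  free_set (\bigcup_(B in F) B).
Proof.
move=> Ffree tot l c ul lF sum0 x xl.
have [l0|[B FB lB]] := seq_in_chain tot lF; first by rewrite l0 in xl.
exact: Ffree B FB l c ul lB sum0 x xl.
Qed.

Lemma free_setU1 (A : set N) y : free_set A -> ~ span_set A y ->
  free_set (y |` A).
Proof.
move=> Afree Ny l c ul lA sum0.
have [yl|yl] := boolP (y \in l); last first.
  apply: Afree => // x xl; case: (lA x xl) => // xy.
  by rewrite -xy xl in yl.
have remA x : x \in rem y l -> A x.
  rewrite mem_rem_uniq // inE => /andP[xy xl].
  by case: (lA x xl) => // /eqP; rewrite (negbTE xy).
rewrite (big_rem y yl) /= in sum0.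
have [cy0|cy0] := eqVneq (c y) 0; last first.
  exfalso; apply: Ny; exists (rem y l), (fun x => - (c y)^-1 * c x); split => //.
  under eq_bigr do rewrite -scalerA.
  rewrite -scaler_sumr.
  have -> : \sum_(x <- rem y l) c x *: x = - (c y *: y).
    by apply/eqP; rewrite -addr_eq0 addrC sum0.
  by rewrite scaleNr scalerN opprK scalerA mulVf // scale1r.
rewrite cy0 scale0r add0r in sum0.
move=> x xl; have [->//|xy] := eqVneq x y.
by apply: (Afree _ _ (rem_uniq _ ul) remA sum0); rewrite mem_rem_uniq // inE xy.
Qed.

Lemma exists_free_spanning_subset (W : set N) :
  exists B, [/\ B `<=` W, free_set B & W `<=` span_set B].
Proof.
have [F FW tot|A [[AW Afree] Amax]] :=
  @Zorn_bigcup _ [set B | B `<=` W /\ free_set B].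
  split; first by move=> x [B FB Bx]; exact: (FW B FB).1.
  by apply: free_bigcup_chain => // B FB; exact: (FW B FB).2.
exists A; split => // y Wy; apply: contrapT => Ny.
have yA : ~ A y.
  move=> Ay; apply: Ny; exists [:: y], (fun=> 1); split.
    by move=> x; rewrite inE => /eqP ->.
  by rewrite big_seq1 scale1r.
apply: (Amax (y |` A)); last by split; [move=> x [->|/AW]|exact: free_setU1].
split; first by move=> x Ax; right.
by move=> AyA; apply: yA; exact: (AyA y (or_introl erefl)).
Qed.

Lemma free_set_family (B : set N) (I : eqType) (l : seq I) (g : I -> N)
    (c : I -> K) :
  free_set B -> uniq l -> {in l &, injective g} ->
  (forall i, i \in l -> B (g i)) ->
  \sum_(i <- l) c i *: g i = 0 -> forall i, i \in l -> c i = 0.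
Proof.
move=> Bfree ul g_inj lB sum0 i il.
pose c' y := c (nth i l (index y (map g l))).
have c'E j : j \in l -> c' (g j) = c j.
  move=> jl; rewrite /c'; congr c.
  have jidx : (index (g j) (map g l) < size l)%N.
    by rewrite -(size_map g) index_mem map_f.
  apply: g_inj => //; first exact: mem_nth.
  by rewrite -(nth_map i (g i)) // nth_index // map_f.
rewrite -(c'E i il); apply: (Bfree (map g l) c').
- by rewrite map_inj_in_uniq.
- by move=> y /mapP[j jl ->]; exact: lB.
- by rewrite big_map -[RHS]sum0; apply: eq_big_seq => j jl; rewrite c'E.
- exact: map_f.
Qed.

End FreeSets.

Section Coordinates.
Variables (K : pzRingType) (N : lmodType K) (X : choiceType) (b : X -> N).

Definition inverse_on (A B : set X) (h h' : X -> X) :=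
  [/\ forall x, A x -> B (h x), forall y, B y -> A (h' y),
      forall x, A x -> h' (h x) = x & forall y, B y -> h (h' y) = y].

Lemma inverse_onC A B h h' : inverse_on A B h h' -> inverse_on B A h' h.
Proof. by case. Qed.

Lemma inverse_on_id A : inverse_on A A id id.
Proof. by []. Qed.

Definition span_of : set N :=
  [set y | exists ps : seq (K * X), y = \sum_(p <- ps) p.1 *: b p.2].

Lemma span_of0 : span_of 0.
Proof. by exists [::]; rewrite big_nil. Qed.

Lemma span_of_b x : span_of (b x).
Proof. by exists [:: (1, x)]; rewrite big_seq1 scale1r. Qed.

Lemma span_of_lin a y z : span_of y -> span_of z -> span_of (a *: y + z).
Proof.
move=> [ps ->] [qs ->]; exists ([seq (a * p.1, p.2) | p <- ps] ++ qs).
rewrite big_cat big_map scaler_sumr; congr (_ + _).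
by apply: eq_bigr => p _; rewrite scalerA.
Qed.

Lemma span_of_scale a y : span_of y -> span_of (a *: y).
Proof.
by move=> Sy; rewrite -[_ *: _]addr0; apply: span_of_lin; last exact: span_of0.
Qed.

Lemma span_of_add y z : span_of y -> span_of z -> span_of (y + z).
Proof. by move=> Sy Sz; rewrite -[y]scale1r; exact: span_of_lin. Qed.

Lemma span_of_sum (I : eqType) (l : seq I) (F : I -> N) :
  (forall i, i \in l -> span_of (F i)) -> span_of (\sum_(i <- l) F i).
Proof.
move=> lF; rewrite big_seq; apply: big_ind => //; first exact: span_of0.
exact: span_of_add.
Qed.

Lemma span_of_fsum (I : choiceType) (J : set I) (F : I -> N) :
  finite_set J -> (forall i, J i -> span_of (F i)) ->
  span_of (\sum_(i \in J) F i).
Proof.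
move=> finJ JF; rewrite fsbig_finite //; apply: span_of_sum => i.
by rewrite in_fset_set // => /set_mem; exact: JF.
Qed.

Lemma uniq_map_filter_inv (A : set X) (h h' : X -> X) (l : seq X) :
  (forall x, A x -> h' (h x) = x) -> uniq l ->
  uniq [seq h z | z <- l & z \in A].
Proof.
move=> hK ul; rewrite map_inj_in_uniq ?filter_uniq // => z1 z2.
rewrite !mem_filter => /andP[/set_mem Az1 _] /andP[/set_mem Az2 _] hz.
by rewrite -(hK _ Az1) hz hK.
Qed.

Section Transport.
Variables (g : N -> N) (A : set X) (h : X -> X).
Hypotheses (g_lin : linear g)
  (g_b : forall x, g (b x) = if x \in A then b (h x) else 0).

Lemma span_of_transport y : span_of y -> span_of (g y).
Proof.
move=> [ps ->]; rewrite linear_fun_sum //; apply: span_of_sum => p _.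
rewrite linear_funZ // g_b; apply: span_of_scale.
by case: ifP => _; [exact: span_of_b|exact: span_of0].
Qed.

Lemma sum_transport (h' : X -> X) (l : seq X) (phi : X -> K) :
  (forall x, A x -> h' (h x) = x) ->
  g (\sum_(z <- l) phi z *: b z) =
  \sum_(t <- [seq h z | z <- l & z \in A]) phi (h' t) *: b t.
Proof.
move=> hK; rewrite linear_fun_sum // big_map big_filter [RHS]big_mkcond /=.
apply: eq_bigr => z _; rewrite linear_funZ // g_b.
by case: ifP => [/set_mem/hK ->|_]; rewrite ?scaler0.
Qed.

End Transport.

Definition coord_of (y : N) (phi : X -> K) := exists l : seq X,
  [/\ uniq l, forall z, z \notin l -> phi z = 0 &
      y = \sum_(z <- l) phi z *: b z].

Lemma sum_widen (l l' : seq X) (phi : X -> K) :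
  uniq l -> uniq l' -> {subset l <= l'} -> (forall z, z \notin l -> phi z = 0) ->
  \sum_(z <- l) phi z *: b z = \sum_(z <- l') phi z *: b z.
Proof.
move=> ul ul' ll' phi0.
rewrite [RHS](bigID (mem l)) /= [X in _ + X]big1 ?addr0; last first.
  by move=> z /phi0 ->; rewrite scale0r.
rewrite -[RHS]big_filter; apply/perm_big/uniq_perm; rewrite ?filter_uniq //.
by move=> z; rewrite mem_filter; case: (boolP (z \in l)) => // /ll' ->.
Qed.

Lemma coord_of_lin a y y' phi phi' : coord_of y phi -> coord_of y' phi' ->
  coord_of (a *: y + y') (fun z => a * phi z + phi' z).
Proof.
move=> [l [ul l0 ->]] [l' [ul' l'0 ->]].
have uu : uniq (undup (l ++ l')) := undup_uniq _.
have sl : {subset l <= undup (l ++ l')}.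
  by move=> z zl; rewrite mem_undup mem_cat zl.
have sl' : {subset l' <= undup (l ++ l')}.
  by move=> z zl; rewrite mem_undup mem_cat zl orbT.
exists (undup (l ++ l')); split => //.
  move=> z zu; rewrite l0 ?l'0 ?mulr0 ?addr0 //; apply: contra zu.
    exact: sl'.
  exact: sl.
rewrite (sum_widen ul uu sl l0) (sum_widen ul' uu sl' l'0) scaler_sumr -big_split.
by apply: eq_bigr => z _; rewrite scalerDl scalerA.
Qed.

Lemma coord_of0 : coord_of 0 (fun=> 0).
Proof. by exists [::]; rewrite big_nil. Qed.

Lemma coord_of_inj y y' phi : coord_of y phi -> coord_of y' phi -> y = y'.
Proof.
move=> yphi y'phi; have := coord_of_lin (-1) yphi y'phi.
have -> : (fun z => -1 * phi z + phi z) = fun=> 0.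
  by apply/funext => z; rewrite mulN1r addNr.
move=> [l [_ _]]; rewrite big1 => [|z _]; last by rewrite scale0r.
by rewrite scaleN1r addrC => /eqP; rewrite subr_eq0 => /eqP ->.
Qed.

Lemma coord_of_b x : coord_of (b x) (fun z => (z == x)%:R).
Proof.
exists [:: x]; split => //; first by move=> z; rewrite inE => /negbTE ->.
by rewrite big_seq1 eqxx scale1r.
Qed.

Lemma span_coord_of y : span_of y -> exists phi, coord_of y phi.
Proof.
move=> [ps ->]; elim: ps => [|p ps [phi IH]].
  by rewrite big_nil; exists (fun=> 0); exact: coord_of0.
by rewrite big_cons; eexists; exact: coord_of_lin (coord_of_b p.2) IH.
Qed.

Lemma coord_of_span y phi : coord_of y phi -> span_of y.
Proof.
move=> [l [_ _ ->]]; apply: span_of_sum => z _.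
exact/span_of_scale/span_of_b.
Qed.

Lemma coord_of_finite y phi : coord_of y phi -> finite_set [set z | phi z != 0].
Proof.
move=> [l [_ l0 _]]; apply: sub_finite_set (finite_seq l) => z /= nz.
by apply: contraNT nz => /l0 ->.
Qed.

Lemma finite_coord_of phi : finite_set [set z | phi z != 0] ->
  exists y, coord_of y phi.
Proof.
move=> fin; pose l := finmap.enum_fset (fset_set [set z | phi z != 0]).
exists (\sum_(z <- l) phi z *: b z), l; split => //.
  exact: finmap.fset_uniq.
move=> z; apply: contraNeq => nz; rewrite in_fset_set //; exact: mem_set.
Qed.

Lemma coord_of_transport (g : N -> N) (A B : set X) (h h' : X -> X) y phi :
  linear g -> (forall x, g (b x) = if x \in A then b (h x) else 0) ->
  inverse_on A B h h' -> coord_of y phi ->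
  coord_of (g y) (fun t => if t \in B then phi (h' t) else 0).
Proof.
move=> g_lin g_b [hAB h'BA hK h'K] [l [ul l0 ->]].
exists [seq h z | z <- l & z \in A]; split.
- exact: uniq_map_filter_inv hK ul.
- move=> t tn; case: ifP => [/set_mem Bt|//]; apply: l0; apply: contra tn => tl.
  apply/mapP; exists (h' t); last by rewrite h'K.
  by rewrite mem_filter tl andbT; apply: mem_set; exact: h'BA.
- rewrite (sum_transport g_lin g_b _ _ hK); apply: eq_big_seq => t.
  move=> /mapP[z]; rewrite mem_filter => /andP[/set_mem Az _] ->.
  by rewrite (mem_set (hAB _ Az)).
Qed.

Hypothesis b_free : forall (l : seq X) (c : X -> K), uniq l ->
  \sum_(z <- l) c z *: b z = 0 -> forall z, z \in l -> c z = 0.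

Lemma coord_of0_eq phi : coord_of 0 phi -> phi = fun=> 0.
Proof.
move=> [l [ul l0 sum0]]; apply/funext => z.
by have [zl|/l0//] := boolP (z \in l); exact: b_free ul (esym sum0) z zl.
Qed.

Lemma coord_of_unique y phi phi' : coord_of y phi -> coord_of y phi' ->
  phi = phi'.
Proof.
move=> yphi yphi'; have := coord_of_lin (-1) yphi yphi'.
rewrite scaleN1r addNr => /coord_of0_eq eq0; apply/funext => z.
apply/esym/eqP; rewrite -subr_eq0 -mulN1r addrC; apply/eqP.
exact: (congr1 (@^~ z) eq0).
Qed.

Definition coords (y : N) : X -> K :=
  if pselect (exists phi, coord_of y phi) is left yc then projT1 (cid yc)
  else fun=> 0.

Lemma coords_eq y phi : coord_of y phi -> coords y = phi.
Proof.
move=> yphi; rewrite /coords; case: pselect => [yc|]; last by case; exists phi.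
exact: coord_of_unique (projT2 (cid yc)) yphi.
Qed.

Lemma coordsP y : span_of y -> coord_of y (coords y).
Proof. by move/span_coord_of => [phi yphi]; rewrite (coords_eq yphi). Qed.

End Coordinates.

Section Acyclicity.
Variables (V E : choiceType) (s : E -> V) (r : E -> set V) (n : nat).
Hypothesis cover : (\bigcup_e r e) `|` range s =
  [set v | exists i, (1 <= i <= n)%N /\ (Xbar s r i v \/ Ik s r i v)].

Definition out_neighbour (w v : V) := exists2 e, s e = v & r e w.

Local Notation F k := (stage s r k).2.

Lemma stage_edges_mono j k : (j <= k)%N -> F k `<=` F j.
Proof.
move=> /subnK <-; elim: (k - j)%N => [|m IH] //= e.
by move=> -[/IH].
Qed.

Lemma stage_edges_n e : ~ F n e.
Proof.
have [i [/andP[i_ge1 i_le] srce]] :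
    [set v | exists i, (1 <= i <= n)%N /\ (Xbar s r i v \/ Ik s r i v)] (s e).
  by rewrite -cover; right; exists e.
suff : ~ F i e by move=> Ne /(stage_edges_mono i_le).
case: i i_ge1 {i_le} srce => [//|k] _ [[A [g [Fg ext]] Ae]|[_ [_ iso]] Fe].
  case: (ext) => [[_ [_ nsrc]] [Fe _]|[_ [nsrc _]] [Fe ne]].
    exact: nsrc e Fe Ae.
  have eg : e = g by apply: contrapT => neg; exact: nsrc e Fe neg Ae.
  by apply: ne; rewrite eg; exists A.
exact: iso e Fe (erefl _).
Qed.

Definition dies k e := F k e /\ ~ F k.+1 e.

Lemma exists_death e : exists k, dies k e.
Proof.
have := @stage_edges_n e; have : F 0 e by [].
elim: n => [//|m IH] F0 NFm; have [Fm|NFm'] := pselect (F m e); first by exists m.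
exact: IH.
Qed.

Lemma alive_before k j e : dies k e -> (j <= k)%N -> F j e.
Proof. by move=> [Fe _] jk; exact: stage_edges_mono jk e Fe. Qed.

Lemma death_lt_n k e : dies k e -> (k < n)%N.
Proof.
move=> de; rewrite ltnNge; apply/negP => nk.
exact/(@stage_edges_n e)/(stage_edges_mono nk de.1).
Qed.

Definition range_extreme k e := forall f, F k f -> ~ r e (s f).
Definition source_extreme k e := forall f, F k f -> ~ r f (s e).

Lemma dies_extreme k e : dies k e -> range_extreme k e \/ source_extreme k e.
Proof.
move=> [Fe NFe].
have [A [_ [[AE [_ nsrc]]|[AE [_ nrng]]]]] : extreme_edges s r (F k) e.
  by apply: contrapT => Ne; apply: NFe.
- by left => f Ff; rewrite -AE; exact: nsrc.
- right => f Ff rf; suff : (A `&` r f) (s e) by rewrite nrng.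
  by split => //; rewrite AE.
Qed.

(* The rank of an edge dying at stage k is k if it is range-extreme there and
   n + (n - k) if it is source-extreme; it drops from e to every g with
   s g in r e. *)
Definition ranked_below m e := exists2 k, dies k e &
  (range_extreme k e /\ (k < m)%N) \/ (source_extreme k e /\ (n + (n - k) < m)%N).

Lemma ranked_below_top e : ranked_below (2 * n).+1 e.
Proof.
have [k de] := exists_death e; have kn := death_lt_n de.
by exists k => //; case: (dies_extreme de) => ?; [left|right]; split => //; lia.
Qed.

Lemma ranked_below_next m e g : ranked_below m.+1 e -> r e (s g) ->
  ranked_below m g.
Proof.
move=> [k de rk] reg; have [j dg] := exists_death g; exists j => //.
have [kn jn] := (death_lt_n de, death_lt_n dg).
have Fe i : (i <= k)%N -> F i e := alive_before de.
have Fg i : (i <= j)%N -> F i g := alive_before dg.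
case: (dies_extreme dg) rk => [gR|gS] [[eR km]|[_ km]].
- have jk : (j < k)%N.
    by rewrite ltnNge; apply/negP => /Fg Fkg; exact: eR g Fkg reg.
  by left; split => //; lia.
- by left; split => //; lia.
- have jk : (j < k)%N.
    by rewrite ltnNge; apply/negP => /Fg Fkg; exact: eR g Fkg reg.
  by case: (gS e (Fe _ (ltnW jk))).
- have kj : (k < j)%N.
    by rewrite ltnNge; apply/negP => /Fe Fje; exact: gS e Fje reg.
  by right; split => //; lia.
Qed.

Lemma ranked_below_Acc m e : ranked_below m e ->
  forall w, r e w -> Acc out_neighbour w.
Proof.
elim: m e => [|m IH] e [k de]; first by case=> -[].
move=> rk w rw; constructor => y [g gw rgy]; rewrite -gw in rw.
by apply: IH rgy; apply: ranked_below_next rw; exists k.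
Qed.

Lemma out_neighbour_wf : well_founded out_neighbour.
Proof.
move=> v; constructor => w [e _ rw].
exact: ranked_below_Acc (ranked_below_top e) w rw.
Qed.

End Acyclicity.

Section Representation.
Variables (V E : choiceType) (s : E -> V) (r : E -> set V).
Variables (K : fieldType) (N : lmodType K).
Variables (P : set V -> N -> N) (S Ss : E -> N -> N).
Hypothesis rep : is_rep s r P S Ss.

Local Hint Resolve Gen0_vertex Gen0_range : core.

Lemma P_linear A : Gen0 r A -> linear (P A).
Proof. by move=> GA; case: rep => -[lin _ _] _ _ _ _; exact: lin. Qed.

Lemma S_linear e : linear (S e).
Proof. by case: rep => -[_ lin _] _ _ _ _; exact: lin. Qed.

Lemma Ss_linear e : linear (Ss e).
Proof. by case: rep => -[_ _ lin] _ _ _ _; exact: lin. Qed.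

Lemma P_set0 x : P set0 x = 0.
Proof. by case: rep => _ [-> _]. Qed.

Lemma P_meet A A' x : Gen0 r A -> Gen0 r A' -> P A (P A' x) = P (A `&` A') x.
Proof. by move=> GA GA'; case: rep => _ [_ [meet _]] _ _ _; exact: meet. Qed.

Lemma P_join A A' x : Gen0 r A -> Gen0 r A' ->
  P (A `|` A') x = P A x + P A' x - P (A `&` A') x.
Proof. by move=> GA GA'; case: rep => _ [_ [_ join]] _ _ _; exact: join. Qed.

Lemma P_src_S e x : P [set s e] (S e x) = S e x.
Proof. by case: rep => _ _ /(_ e x) [-> _]. Qed.

Lemma S_P_range e x : S e (P (r e) x) = S e x.
Proof. by case: rep => _ _ /(_ e x) [_ [-> _]]. Qed.

Lemma P_range_Ss e x : P (r e) (Ss e x) = Ss e x.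
Proof. by case: rep => _ _ /(_ e x) [_ [_ [-> _]]]. Qed.

Lemma Ss_P_src e x : Ss e (P [set s e] x) = Ss e x.
Proof. by case: rep => _ _ /(_ e x) [_ [_ [_ ->]]]. Qed.

Lemma Ss_S e f x : Ss e (S f x) = if e == f then P (r e) x else 0.
Proof. by case: rep => _ _ _ -> _. Qed.

Section InducedEquivalence.
Variables (X : choiceType) (b : X -> N) (Rs : E -> set X) (D : set V -> set X).
Variables (f finv : E -> X -> X).
Hypotheses (b_free : forall (l : seq X) (c : X -> K), uniq l ->
    \sum_(z <- l) c z *: b z = 0 -> forall z, z \in l -> c z = 0)
  (M_span : image_module r P S Ss = span_of b)
  (f_inv : forall e, inverse_on (D (r e)) (Rs e) (f e) (finv e))
  (S_b : forall e x, S e (b x) = if x \in D (r e) then b (f e x) else 0)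
  (Ss_b : forall e x, Ss e (b x) = if x \in Rs e then b (finv e x) else 0)
  (P_b : forall A x, Gen0 r A -> P A (b x) = if x \in D A then b x else 0).

Lemma equivalent_to_induced_of_basis :
  equivalent_to_induced r P S Ss true Rs D f finv.
Proof.
rewrite /equivalent_to_induced M_span; exists (coords b); split.
- move=> a x y Mx My; apply: coords_eq => //.
  exact: coord_of_lin (coordsP b_free Mx) (coordsP b_free My).
- by move=> x Mx _; exact: coord_of_finite (coordsP b_free Mx).
- move=> x y Mx My Txy; apply: (coord_of_inj (coordsP b_free Mx)).
  by rewrite Txy; exact: coordsP.
- move=> phi /(_ isT)/(finite_coord_of b)[y yphi].
  by exists y; [exact: coord_of_span yphi|exact: coords_eq].
- move=> x /(coordsP b_free) xT.
  split; [|split] => [e|e|A GA]; apply: coords_eq => //.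
  + exact: coord_of_transport (S_linear e) (S_b e) (f_inv e) xT.
  + exact: coord_of_transport (Ss_linear e) (Ss_b e) (inverse_onC (f_inv e)) xT.
  + exact: coord_of_transport (P_linear GA) (fun x => P_b x GA)
             (inverse_on_id _) xT.
Qed.

End InducedEquivalence.

Section Walks.
Variable B : V -> set N.
Hypotheses (B_sub : forall w, B w `<=` P [set w] @` setT)
  (B_free : forall w, free_set (B w)).

Definition sink w := forall e, s e <> w.

Definition walk_src (a : seq E) (w : V) : V := if a is e :: _ then s e else w.

Fixpoint is_walk (a : seq E) (w : V) : Prop :=
  if a is e :: a' then r e (walk_src a' w) /\ is_walk a' w else True.

(* A walk ([:: e_1; ...; e_k], w, u) is a path e_1 ... e_k of G ending at the
   sink w, labelled by a basis vector u of N_w; it stands for the vector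
   S_{e_1} (... (S_{e_k} u)) of M. *)
Definition labelled_walk (t : (seq E * V * N)%type) :=
  [/\ B t.1.2 t.2, sink t.1.2 & is_walk t.1.1 t.1.2].

Definition walk := {t : (seq E * V * N)%type | `[< labelled_walk t >]}.

Definition wedges (x : walk) := (val x).1.1.
Definition wend (x : walk) := (val x).1.2.
Definition wlabel (x : walk) := (val x).2.
Definition wsrc (x : walk) := walk_src (wedges x) (wend x).
Definition wvec (x : walk) : N := foldr S (wlabel x) (wedges x).

Definition wcons e (x : walk) : walk :=
  insubd x (e :: wedges x, wend x, wlabel x).
Definition wbehead (x : walk) : walk :=
  insubd x (behead (wedges x), wend x, wlabel x).

Definition Rw e : set walk := [set x | ohead (wedges x) = Some e].
Definition Dw (A : set V) : set walk := [set x | A (wsrc x)].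

Lemma walkE (x : walk) : val x = (wedges x, wend x, wlabel x).
Proof. by rewrite /wedges /wend /wlabel; case: (val x) => [[]]. Qed.

Lemma walkP (x : walk) :
  [/\ B (wend x) (wlabel x), sink (wend x) & is_walk (wedges x) (wend x)].
Proof. by have /asboolP := valP x; rewrite walkE. Qed.

Lemma wcons_val e x : Dw (r e) x ->
  val (wcons e x) = (e :: wedges x, wend x, wlabel x).
Proof.
by move=> Dx; rewrite val_insubd; have [Bx sx wx] := walkP x; rewrite asboolT.
Qed.

Lemma wbehead_val x : val (wbehead x) = (behead (wedges x), wend x, wlabel x).
Proof.
rewrite val_insubd; have [Bx sx] := walkP x.
by case: (wedges x) => [|e a] /= => [wx|[_ wx]]; rewrite asboolT.
Qed.

Lemma wbehead_edges x : wedges (wbehead x) = behead (wedges x).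
Proof. by rewrite {1}/wedges wbehead_val. Qed.

Lemma wbehead_end x : wend (wbehead x) = wend x.
Proof. by rewrite {1}/wend wbehead_val. Qed.

Lemma wbehead_label x : wlabel (wbehead x) = wlabel x.
Proof. by rewrite {1}/wlabel wbehead_val. Qed.

Lemma RwP e x : Rw e x <-> exists a, wedges x = e :: a.
Proof.
rewrite /Rw /=; case: (wedges x) => [|g a] /=; first by split => [|[a]].
by split => [[->]|[a' [-> _]]]; first exists a.
Qed.

Lemma wbehead_Dw e y : Rw e y -> Dw (r e) (wbehead y).
Proof.
move=> /RwP[a ya]; have [_ _] := walkP y; rewrite ya => -[rw _].
by rewrite /Dw /= /wsrc wbehead_edges wbehead_end ya.
Qed.

Lemma wcons_inverse e : inverse_on (Dw (r e)) (Rw e) (wcons e) wbehead.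
Proof.
split => [x Dx|y /wbehead_Dw //|x Dx|y Ry].
- by apply/RwP; exists (wedges x); rewrite /wedges wcons_val.
- by apply: val_inj; rewrite wbehead_val walkE /wedges /wend /wlabel wcons_val.
- apply: val_inj; rewrite wcons_val; last exact: wbehead_Dw Ry.
  rewrite wbehead_edges wbehead_end wbehead_label walkE.
  by have /RwP[a ->] := Ry.
Qed.

Lemma walks_branching : branching_system s r Rw Dw wcons (fun=> wbehead).
Proof.
split.
- move=> e g eg; apply/seteqP; split => x // [xe xg]; apply: eg.
  by case: (etrans (esym xe) xg).
- by split => //; split => A A' _ _; apply/seteqP.
- by move=> e x /RwP[a xa]; rewrite /Dw /= /wsrc xa.
- move=> v [e0 se0] _; apply/seteqP; split => x; rewrite /Dw /= /wsrc.
  + case xe: (wedges x) => [|g a] /= xv.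
      by have [_ sink_end _] := walkP x; case: (sink_end e0); rewrite se0 -xv.
    by exists g => //; apply/RwP; exists a.
  + by move=> [g <-] /RwP[a ->].
- by move=> e; exact: wcons_inverse.
Qed.

Lemma P_src_wvec x : P [set wsrc x] (wvec x) = wvec x.
Proof.
rewrite /wsrc /wvec; case: (wedges x) => [|e a] /=; last exact: P_src_S.
by have [/B_sub[y _ <-] _ _] := walkP x; rewrite P_meet // setIid.
Qed.

Lemma P_wvec A x : Gen0 r A -> P A (wvec x) = if x \in Dw A then wvec x else 0.
Proof.
move=> GA; rewrite -{1}P_src_wvec P_meet //.
case: ifP => [/set_mem Ax|/negP nAx].
  by rewrite setIidr ?P_src_wvec // => v ->.
rewrite (_ : _ `&` _ = set0) ?P_set0 //; apply/seteqP; split => // v [Av vx].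
by apply: nAx; apply: mem_set; rewrite /Dw /= -vx.
Qed.

Lemma wvec_wcons e x : Dw (r e) x -> wvec (wcons e x) = S e (wvec x).
Proof. by move=> Dx; rewrite {1}/wvec /wedges /wlabel wcons_val. Qed.

Lemma S_wvec e x :
  S e (wvec x) = if x \in Dw (r e) then wvec (wcons e x) else 0.
Proof.
rewrite -S_P_range P_wvec //; case: ifP => [/set_mem/wvec_wcons //|_].
exact: linear_fun0 (S_linear e).
Qed.

Lemma wvec_behead e x : Rw e x -> wvec x = S e (wvec (wbehead x)).
Proof.
by move=> /RwP[a xa]; rewrite /wvec wbehead_edges wbehead_label xa.
Qed.

Lemma Ss_wvec e x :
  Ss e (wvec x) = if x \in Rw e then wvec (wbehead x) else 0.
Proof.
case: ifPn => [/set_mem Rx|nRx].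
  by rewrite (wvec_behead Rx) Ss_S eqxx P_wvec // (mem_set (wbehead_Dw Rx)).
case xe: (wedges x) => [|g a].
  rewrite -Ss_P_src P_wvec // ifF ?(linear_fun0 (Ss_linear e)) //.
  apply/negP => /set_mem; rewrite /Dw /= /wsrc xe /=.
  by have [_ sink_end _] := walkP x; move/esym; exact: sink_end.
have Rgx : Rw g x by apply/RwP; exists a.
rewrite (wvec_behead Rgx) Ss_S; case: eqP => // eg.
by rewrite eg (mem_set Rgx) in nRx.
Qed.

Lemma Dw_sink w x : sink w -> Dw [set w] x -> wedges x = [::] /\ wend x = w.
Proof.
by move=> sw; rewrite /Dw /= /wsrc; case: (wedges x) => [|e a] //= /sw.
Qed.

Lemma wvec_free_nil (l : seq walk) (phi : walk -> K) : uniq l ->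
  \sum_(z <- l) phi z *: wvec z = 0 ->
  forall z, z \in l -> wedges z = [::] -> phi z = 0.
Proof.
move=> ul sum0 z zl z_nil.
have [_ sink_w _] := walkP z; set w := wend z in sink_w.
set l' := [seq t <- l | t \in Dw [set w]].
have l'_nil t : t \in l' -> wedges t = [::] /\ wend t = w.
  by rewrite mem_filter => /andP[/set_mem/(Dw_sink sink_w) ? _].
have sum' : \sum_(t <- l') phi t *: wlabel t = 0.
  have P_lin := P_linear (Gen0_vertex r w).
  have := sum_transport (h := id) (h' := id) P_lin
    (fun x => P_wvec x (Gen0_vertex r w)) l phi (fun _ _ => erefl).
  rewrite sum0 (linear_fun0 P_lin) map_id -/l' => sum_l'; rewrite [RHS]sum_l'.
  by apply: eq_big_seq => t /l'_nil[t_nil _]; rewrite /wvec t_nil.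
apply: (free_set_family (@B_free w) _ _ _ sum').
- exact: filter_uniq.
- move=> t1 t2 /l'_nil[n1 e1] /l'_nil[n2 e2] lab; apply: val_inj.
  by rewrite !walkE n1 n2 e1 e2 lab.
- by move=> t /l'_nil[_ <-]; case: (walkP t).
- by rewrite mem_filter zl andbT; apply: mem_set; rewrite /Dw /= /wsrc z_nil.
Qed.

Lemma wvec_free (l : seq walk) (phi : walk -> K) : uniq l ->
  \sum_(z <- l) phi z *: wvec z = 0 -> forall z, z \in l -> phi z = 0.
Proof.
move=> + + z; move: {2}(size (wedges z)) (erefl (size (wedges z))) => k.
elim: k l phi z => [|k IH] l phi z zk ul sum0 zl.
  exact: wvec_free_nil ul sum0 z zl (size0nil zk).
case ze : (wedges z) zk => [//|e a] [ak].
have Rz : Rw e z by apply/RwP; exists a.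
have [_ _ _ wbeheadK] := wcons_inverse e.
have := sum_transport (Ss_linear e) (Ss_wvec e) l phi wbeheadK.
rewrite sum0 (linear_fun0 (Ss_linear e)) => /esym sum'.
rewrite -(wbeheadK z Rz); apply: IH (uniq_map_filter_inv wbeheadK ul) sum' _.
- by rewrite wbehead_edges ze.
- by apply: map_f; rewrite mem_filter zl (mem_set Rz).
Qed.

Lemma wvec_image_module x : image_module r P S Ss (wvec x).
Proof.
rewrite /wvec; case: (wedges x) => [|e a] /=; last exact: im_S.
by have [/B_sub[y _ <-] _ _] := walkP x; exact: im_P.
Qed.

Section Spanning.
Hypotheses (B_span : forall w, P [set w] @` setT `<=` span_set (B w))
  (range_dsum : forall e, internal_dsum (P (r e) @` setT) (r e)
                  (fun v => P [set v] @` setT))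
  (src_dsum : forall v, s @^-1` [set v] !=set0 ->
     internal_dsum (P [set v] @` setT) (s @^-1` [set v])
                   (fun e => (fun x => S e (Ss e x)) @` setT))
  (wf : well_founded (out_neighbour s r)).

Lemma span_P_range e z :
  (forall w, r e w -> forall y, span_of wvec (P [set w] y)) ->
  span_of wvec (P (r e) z).
Proof.
move=> IH; have [J [xs [finJ Jr xsN ->]]] :=
  ((range_dsum e).1 (P (r e) z)).1 (ex_intro2 _ _ z I erefl).
apply: span_of_fsum => // w Jw; have [y _ <-] := xsN w Jw.
exact: IH (Jr w Jw) y.
Qed.

Lemma span_P_vertex v y : span_of wvec (P [set v] y).
Proof.
elim: (wf v) y => {}v _ IH y.
have [[e0 se0]|no_out] := pselect (exists e, s e = v).
  have out : s @^-1` [set v] !=set0 by exists e0.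
  have [J [xs [finJ Js xsN ->]]] :=
    ((src_dsum out).1 (P [set v] y)).1 (ex_intro2 _ _ y I erefl).
  apply: span_of_fsum => // e Je; have [y' _ <-] := xsN e Je.
  rewrite -S_P_range; apply: (span_of_transport (S_linear e) (S_wvec e)).
  by apply: span_P_range => w rw y''; apply: IH; exists e => //; exact: Js.
have sink_v : sink v by move=> e se; apply: no_out; exists e.
have [l [c [lB ->]]] := @B_span v _ (ex_intro2 _ _ y I erefl).
apply: span_of_sum => u /lB Bu; apply: span_of_scale.
have ok : `[< labelled_walk ([::], v, u) >] by apply/asboolP.
by rewrite (_ : u = wvec (exist _ ([::], v, u) ok)) //; exact: span_of_b.
Qed.

Lemma span_P A y : Gen0 r A -> span_of wvec (P A y).
Proof.
move=> GA; elim: GA y => [||e|A1 A2 G1 IH1 G2 IH2|A1 A2 G1 IH1 G2 _] y.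
- by rewrite P_set0; exact: span_of0.
- exact: span_P_vertex.
- by apply: span_P_range => w _; exact: span_P_vertex.
- rewrite P_join // -P_meet // -scaleN1r.
  apply: span_of_add; first exact: span_of_add (IH1 y) (IH2 y).
  exact/span_of_scale/IH1.
- by rewrite -P_meet //; exact: IH1.
Qed.

Lemma image_module_wvec : image_module r P S Ss = span_of wvec.
Proof.
apply/seteqP; split => y.
- elim=> {y} [A x GA|e x|e x||x y _ Sx _ Sy|a x _ Sx].
  + exact: span_P.
  + by rewrite -P_src_S; exact: span_P_vertex.
  + by rewrite -P_range_Ss; exact: span_P.
  + exact: span_of0.
  + exact: span_of_add.
  + exact: span_of_scale.
- move=> [ps ->]; apply: big_ind => [|x z|p _]; first exact: im_zero.
  + exact: im_add.
  + exact/im_scale/wvec_image_module.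
Qed.

End Spanning.

End Walks.

End Representation.

Theorem mainTheorem10 (V E : choiceType) (s : E -> V) (r : E -> set V)
  (r_nonempty : forall e, r e !=set0)
  (n : nat) (n_ge1 : (1 <= n)%N)
  (X_nonempty : forall i, (1 <= i <= n)%N -> Xk s r i !=set0)
  (cover : (\bigcup_e r e) `|` range s =
           [set v | exists i, (1 <= i <= n)%N /\ (Xbar s r i v \/ Ik s r i v)])
  (R : fieldType) (N : lmodType R)
  (P : set V -> N -> N) (S Ss : E -> N -> N)
  (Hrep : is_rep s r P S Ss)
  (Hrange : forall e, internal_dsum (P (r e) @` setT) (r e)
                        (fun v => P [set v] @` setT))
  (Hsrc : forall v, s @^-1` [set v] !=set0 ->
            internal_dsum (P [set v] @` setT) (s @^-1` [set v])
                          (fun e => (fun x => S e (Ss e x)) @` setT)) :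
  exists (X : Type) (fin : bool) (Rs : E -> set X) (D : set V -> set X)
         (f finv : E -> X -> X),
    branching_system s r Rs D f finv /\
    equivalent_to_induced r P S Ss fin Rs D f finv.
Proof.
have [B basis] :=
  choice (fun w => exists_free_spanning_subset (P [set w] @` setT)).
have B_sub w : B w `<=` P [set w] @` setT by case: (basis w).
have B_free w : free_set (B w) by case: (basis w).
have B_span w : P [set w] @` setT `<=` span_set (B w) by case: (basis w).
exists (walk s r B), true, (Rw (B:=B)), (Dw (B:=B)), (wcons (B:=B)),
  (fun=> wbehead (B:=B)).
split; first exact: walks_branching.
apply: (equivalent_to_induced_of_basis Hrep (b := wvec S (B:=B))).
- move=> l c ul sum0; exact: (wvec_free Hrep B_sub B_free ul sum0).
- exact: (image_module_wvec Hrep B_sub B_span Hrange Hsrc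
           (out_neighbour_wf cover)).
- exact: wcons_inverse.
- exact (S_wvec Hrep B_sub).
- exact (Ss_wvec Hrep B_sub).
- exact (P_wvec Hrep B_sub).
Qed.
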